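(* Let $\rho\in\mathbb N\cup\{\infty\}$, let $D$ be a Van Kampen diagram over $X_\rho$, and let $C\subset D$ be a simply connected cluster which is not complicated. Then $\|\partial C\|_\infty\le\mathrm{length}(\partial C)$ and $\|\partial C\|_1\le 2\,\mathrm{length}(\partial C)$.
   Context: Setting. $G=\langle S\mid\mathcal R\rangle$ is a finite presentation with $S$ finite symmetric and relators of length 2 or 3. $H_1,\dots,H_n\le G$, and $S_i\subset S$ is a finite symmetric generating set of $H_i$. Truncated relative presentation. For $\rho\in\mathbb N\cup\{\infty\}$, $\tilde H_i=\langle\tilde S_i\mid$ words of length $\le\rho$ over $S_i$ trivial in $H_i\rangle$, with $\tilde S_i$ a copy of $S_i$ and natural epimorphism $p_i:\tilde H_i\to H_i$. Put $\hat S=S\sqcup\tilde H_1\sqcup\dots\sqcup\tilde H_n$, each element of $\tilde H_i$ being a letter. $X_\rho$ is the presentation of $G$ with generators $\hat S$ and relators: - $\mathcal R'$, consisting of $\mathcal R$ together with the words $\tilde s^{-1}p_i(\tilde s)$ for $\tilde s\in\tilde S_i$; - for each $i$, all words of at most 3 letters of $\tilde H_i$ with trivial product in $\tilde H_i$. Complexity. $\|s\|=1$ for $s\in S$. For $a\in\tilde H_i$, $\|a\|$ is the word length with respect to $\tilde S_i$. For paths, $\|\cdot\|_1$ and $\|\cdot\|_\infty$ are the sum and the maximum of the edge-label complexities, and $\mathrm{length}$ is the number of edges. Clusters. 2-cells have type $\mathcal R'$ or $\tilde H_i$ according to their relator. Cells of the same type $\tilde H_i$ sharing an edge are cluster-adjacent.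 A cluster is the closure of a class of the transitive closure of this relation. $\partial C$ is the union of the edges of $C$ lying in exactly one 2-cell of $C$. Complicated. A cluster $C$ is complicated if $\partial C\cap\partial D$ contains at least two edges. *)

From Stdlib Require Import Relations ClassicalEpsilon.
From mathcomp Require Import all_boot.
Set Implicit Arguments. Unset Strict Implicit. Unset Printing Implicit Defensive.

(* Words in the free group on an alphabet A: sequences of signed letters      *)
(* (a, true) = a, (a, false) = a^{-1}.                                        *)
Definition inv_word {A : Type} (w : seq (A * bool)) : seq (A * bool) :=
  rev (map (fun x => (x.1, ~~ x.2)) w).

(* The congruence on words defining the group < alph | rel > : free          *)
(* cancellation of letters of the alphabet [alph] and insertion/deletion of   *)
(* relators (i.e. equality modulo the normal closure of the relators).       *)
Inductive wequiv {A : Type} (alph : A -> Prop) (rel : seq (A * bool) -> Prop) :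
    seq (A * bool) -> seq (A * bool) -> Prop :=
| weq_refl w : wequiv alph rel w w
| weq_sym u v : wequiv alph rel u v -> wequiv alph rel v u
| weq_trans u v w : wequiv alph rel u v -> wequiv alph rel v w -> wequiv alph rel u w
| weq_free u v a b : alph a ->
    wequiv alph rel (u ++ [:: (a, b); (a, ~~ b)] ++ v) (u ++ v)
| weq_rel u r v : rel r -> wequiv alph rel (u ++ r ++ v) (u ++ v).

Definition pb (P : Prop) : bool :=
  if excluded_middle_informative P then true else false.
Lemma pbP (P : Prop) : P -> pb P.
Proof. by rewrite /pb; case: excluded_middle_informative. Qed.

Section Presentation.

(* G = < S | R >, S finite (symmetric), R a finite list of relators over S;  *)
(* H_i = subgroup generated by S_i (i < n);  rho : None = infinity.          *)
Variables (S : finType) (R : seq (seq S)) (n : nat) (Si : 'I_n -> {set S})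
          (rho : option nat).

Definition pos_word (w : seq S) : seq (S * bool) := map (fun s => (s, true)) w.

Definition relG (r : seq (S * bool)) : Prop :=
  exists r0, r0 \in R /\ r = pos_word r0.

Definition trivG (w : seq (S * bool)) : Prop := wequiv (fun _ => True) relG w [::].

Definition le_rho (k : nat) : bool :=
  match rho with None => true | Some m => k <= m end.

(* relators of the truncated group tilde H_i : words of length <= rho over   *)
(* S_i which are trivial in H_i (equivalently in G, as H_i <= G)             *)
Definition relH (i : 'I_n) (r : seq (S * bool)) : Prop :=
  exists w : seq S, all (mem (Si i)) w /\ le_rho (size w) /\
    trivG (pos_word w) /\ r = pos_word w.

Definition hequiv (i : 'I_n) : seq (S * bool) -> seq (S * bool) -> Prop :=
  wequiv (fun s => s \in Si i) (relH i).

(* Letters of hat S = S |_| tilde H_1 |_| ... |_| tilde H_n.  An element of  *)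
(* tilde H_i is represented by a word over tilde S_i^{+-1} (letters of S_i);  *)
Inductive hletter : Type :=
| LS of S
| LH of 'I_n & seq (S * bool).

Definition valid_letter (l : hletter) : bool :=
  match l with LS _ => true | LH i w => all (fun x => x.1 \in Si i) w end.

Definition isLH (i : 'I_n) (l : hletter) : bool :=
  match l with LH j _ => j == i | LS _ => false end.

Definition leqv (x y : hletter * bool) : Prop :=
  x.2 = y.2 /\
  match x.1, y.1 with
  | LS s, LS t => s = t
  | LH i w, LH j w' => i = j /\ hequiv i w w'
  | _, _ => False
  end.

Fixpoint lseq_eqv (u v : seq (hletter * bool)) : Prop :=
  match u, v with
  | [::], [::] => True
  | x :: u', y :: v' => leqv x y /\ lseq_eqv u' v'
  | _, _ => False
  end.

Definition hword (x : hletter * bool) : seq (S * bool) :=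
  match x.1 with
  | LH _ w => if x.2 then w else inv_word w
  | LS _ => [::]
  end.

Definition relX (r : seq (hletter * bool)) : Prop :=
  (exists r0, r0 \in R /\ r = map (fun s => (LS s, true)) r0)
  (* tilde s^{-1} p_i(tilde s), for tilde s in tilde S_i *)
  \/ (exists (i : 'I_n) (s : S), s \in Si i /\
        r = [:: (LH i [:: (s, true)], false); (LS s, true)])
  \/ (exists i : 'I_n, size r <= 3 /\
        all (fun x => isLH i x.1 && valid_letter x.1) r /\
        hequiv i (flatten (map hword r)) [::]).

Definition hcplx_pred (i : 'I_n) (w : seq (S * bool)) (k : nat) : bool :=
  pb (exists w', size w' = k /\ hequiv i w w').

Lemma hcplx_ex i w : exists k, hcplx_pred i w k.
Proof. by exists (size w); apply: pbP; exists w; split => //; apply: weq_refl. Qed.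

Definition cplx (l : hletter) : nat :=
  match l with
  | LS _ => 1
  | LH i w => ex_minn (hcplx_ex i w)
  end.

(* Van Kampen diagrams as labelled planar combinatorial maps.                *)
(* D = darts (oriented edges), ed = reversal of a dart (fixed-point-free     *)
(* involution), fa = successor of a dart along its face (a permutation),     *)
(* vertices = orbits of fa \o ed (darts with the same tail), faces = orbits  *)
(* of fa; [outer] is a dart of the outer face; the other faces are the       *)
(* 2-cells.  lab d = label of the dart d (an oriented letter of hat S).      *)
Section Diagram.
Variables (D : finType) (ed fa : D -> D) (outer : D) (lab : D -> hletter * bool).

Definition sigma (x : D) : D := fa (ed x).

Definition glink (x y : D) : bool := (y == ed x) || (y == fa x).

Definition face_word (x : D) : seq (hletter * bool) := map lab (orbit fa x).

Definition inner (x : D) : bool := ~~ fconnect fa outer x.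

Definition cyc_relX (w : seq (hletter * bool)) : Prop :=
  exists r k, relX r /\
    (lseq_eqv w (rot k r) \/ lseq_eqv w (rot k (inv_word r))).

Definition is_VK : Prop :=
  [/\ (forall x, ed (ed x) = x), (forall x, ed x != x), injective fa &
      (forall x y, connect glink x y)] /\ [/\
      (* planar: Euler characteristic V - E + F = 2 *)
      (fcard sigma D + fcard fa D).*2 = #|D| + 4,
      (forall x, lab (ed x) = ((lab x).1, ~~ (lab x).2) /\ valid_letter (lab x).1)
    &
      (forall x, inner x -> cyc_relX (face_word x))].

Definition typeH (i : 'I_n) (x : D) : bool :=
  inner x && all (fun y => isLH i (lab y).1) (orbit fa x).

Definition cadj (i : 'I_n) (x y : D) : bool :=
  [&& typeH i x, typeH i y &
      fconnect fa x y || [exists z, fconnect fa x z && fconnect fa (ed z) y]].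

(* the cluster containing the cell of x0, as the set of darts of its cells *)
Definition cluster (i : 'I_n) (x0 : D) : {set D} := [set y | connect (cadj i) x0 y].

Section Cluster.
Variable C : {set D}.

(* edges of (the closure of) C *)
Definition inCl (x : D) : bool := (x \in C) || (ed x \in C).

(* boundary of C: edges lying in exactly one 2-cell of C (counted by sides); *)
(* each such edge is represented by its dart on the C side                   *)
Definition bdC : {set D} := [set x in C | ed x \notin C].

Definition bdC_bdD : {set D} := [set x in bdC | fconnect fa outer (ed x)].

Definition complicated : bool := 1 < #|bdC_bdD|.

(* combinatorial simple connectivity of the closure of C *)
Definition consec (x y : D) : bool := fconnect sigma (ed x) y.

Definition loopC (p : seq D) : bool := all inCl p && cycle consec p.

Definition hstep (p q : seq D) : Prop :=
  loopC p /\ loopC q /\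
  (q = rot 1 p \/
   exists u v, q = u ++ v /\
     ((exists x, inCl x /\ p = u ++ [:: x; ed x] ++ v) \/
      (exists x, x \in C /\ p = u ++ orbit fa x ++ v))).

Definition simply_connected : Prop :=
  (forall x y, inCl x -> inCl y ->
     connect (fun a b => [&& inCl a, inCl b & consec a b || (b == ed a)]) x y) /\
  (forall p, loopC p -> clos_refl_sym_trans _ hstep p [::]).

Definition norm1_bd : nat := \sum_(x in bdC) cplx (lab x).1.
Definition norminf_bd : nat := \max_(x in bdC) cplx (lab x).1.
Definition length_bd : nat := #|bdC|.

End Cluster.
End Diagram.
End Presentation.

From HB Require Import structures.
From mathcomp Require Import all_boot.
Set Implicit Arguments. Unset Strict Implicit. Unset Printing Implicit Defensive.

(* Every 2-cell of a cluster C of type tilde H_i reads a relator of tilde H_i, so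
   rotating a closed path, cancelling a backtrack or removing a cell of C does not
   change whether the path reads the identity of tilde H_i; as the closure of C is
   simply connected, every closed path in it, in particular the boundary loop, reads
   the identity.  An edge of bd C not on bd D also borders a cell outside C; since it
   carries a letter of tilde H_i, that cell is a relator s^-1 p_i(s), so the letter
   has complexity at most 1.  As C is not complicated, at most one edge of bd C lies
   on bd D, and the boundary loop writes its letter as a product of the other
   letters, of complexity at most length(bd C). *)

Section Words.
Variables (A : eqType) (alph : A -> Prop) (rel : seq (A * bool) -> Prop).
Local Notation weq := (wequiv alph rel).

Lemma wequiv_ctx u v m m' : weq m m' -> weq (u ++ m ++ v) (u ++ m' ++ v).
Proof.
have E3 (x y z : seq (A * bool)) : u ++ (x ++ y ++ z) ++ v = (u ++ x) ++ y ++ (z ++ v).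
  by rewrite !catA.
have E2 (x z : seq (A * bool)) : u ++ (x ++ z) ++ v = (u ++ x) ++ (z ++ v).
  by rewrite !catA.
elim=> {m m'} [w|? ? _ ?|? ? ? _ IH1 _ IH2|u0 v0 a b Ha|u0 r v0 Hr].
- exact: weq_refl.
- exact: weq_sym.
- exact: weq_trans IH1 IH2.
- by rewrite E3 E2; apply: weq_free.
- by rewrite E3 E2; apply: weq_rel.
Qed.

Lemma wequiv_cat u u' v v' : weq u u' -> weq v v' -> weq (u ++ v) (u' ++ v').
Proof.
move=> Hu Hv; apply: (weq_trans (v := u' ++ v)).
  by have := wequiv_ctx [::] v Hu.
by have := wequiv_ctx u' [::] Hv; rewrite !cats0.
Qed.

Lemma wequiv_trivial_iff u v : weq u v -> (weq u [::] <-> weq v [::]).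
Proof. by move=> H; split=> H'; [apply: weq_trans (weq_sym H) H' | apply: weq_trans H H']. Qed.

Lemma inv_word_cat (u v : seq (A * bool)) :
  inv_word (u ++ v) = inv_word v ++ inv_word u.
Proof. by rewrite /inv_word map_cat rev_cat. Qed.

Lemma inv_wordK : involutive (@inv_word A).
Proof.
move=> w; rewrite /inv_word map_rev revK -map_comp /=.
by elim: w => //= [[a b] w ->]; rewrite negbK.
Qed.

Lemma inv_word_cons x (w : seq (A * bool)) :
  inv_word (x :: w) = inv_word w ++ [:: (x.1, ~~ x.2)].
Proof. by rewrite -cat1s inv_word_cat. Qed.

Lemma size_inv_word (w : seq (A * bool)) : size (inv_word w) = size w.
Proof. by rewrite /inv_word size_rev size_map. Qed.

Lemma mem_inv_word (w : seq (A * bool)) y : (y \in inv_word w) = ((y.1, ~~ y.2) \in w).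
Proof.
rewrite /inv_word mem_rev; apply/mapP/idP => [[z Hz ->] | Hy].
  by rewrite /= negbK -surjective_pairing.
by exists (y.1, ~~ y.2); rewrite //= negbK -surjective_pairing.
Qed.

Definition word_over (w : seq (A * bool)) : Prop := forall x, x \in w -> alph x.1.

Lemma word_over_cat u v : word_over (u ++ v) <-> word_over u /\ word_over v.
Proof.
split; first by move=> H; split=> x Hx; apply: H; rewrite mem_cat Hx ?orbT.
by case=> Hu Hv x; rewrite mem_cat => /orP [] ?; [apply: Hu | apply: Hv].
Qed.

Lemma word_over_inv w : word_over w -> word_over (inv_word w).
Proof. by move=> H x; rewrite /inv_word mem_rev => /mapP [y Hy ->]; exact: H Hy. Qed.

Lemma wequiv_cancel w : word_over w -> weq (w ++ inv_word w) [::].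
Proof.
elim: w => [|[a b] w IH] Hw /=; first exact: weq_refl.
have Hw' : word_over w by move=> y Hy; apply: Hw; rewrite inE Hy orbT.
rewrite inv_word_cons /=.
apply: (weq_trans (v := [:: (a, b)] ++ [::] ++ [:: (a, ~~ b)])).
  by have := wequiv_ctx [:: (a, b)] [:: (a, ~~ b)] (IH Hw'); rewrite /= -catA.
exact: (@weq_free _ _ _ [::] [::] a b (Hw (a, b) (mem_head _ _))).
Qed.

Lemma wequiv_cancel_inv w : word_over w -> weq (inv_word w ++ w) [::].
Proof. by move/word_over_inv/wequiv_cancel; rewrite inv_wordK. Qed.

Lemma wequiv_rot u v : word_over v -> weq (u ++ v) [::] -> weq (v ++ u) [::].
Proof.
move=> Hv H.
apply: (weq_trans (v := v ++ (u ++ v) ++ inv_word v)).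
  have := wequiv_ctx (v ++ u) [::] (weq_sym (wequiv_cancel Hv)).
  by rewrite !cats0 !catA.
apply: (weq_trans (v := v ++ [::] ++ inv_word v)); first exact: wequiv_ctx.
exact: wequiv_cancel.
Qed.

Lemma wequiv_cat_trivial u W : word_over W -> weq (u ++ W) [::] -> weq u (inv_word W).
Proof.
move=> HW H; apply: (weq_trans (v := u ++ W ++ inv_word W)).
  by have := wequiv_ctx u [::] (weq_sym (wequiv_cancel HW)); rewrite !cats0.
by rewrite catA; have := wequiv_ctx [::] (inv_word W) H.
Qed.

Hypothesis rel_over : forall r, rel r -> word_over r.

Lemma wequiv_inv u v : weq u v -> weq (inv_word u) (inv_word v).
Proof.
elim=> {u v} [w|? ? _ ?|? ? ? _ IH1 _ IH2|u0 v0 a b Ha|u0 r v0 Hr].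
- exact: weq_refl.
- exact: weq_sym.
- exact: weq_trans IH1 IH2.
- rewrite !inv_word_cat -catA.
  have -> : inv_word [:: (a, b); (a, ~~ b)] = [:: (a, b); (a, ~~ b)].
    by rewrite /inv_word /= negbK.
  exact: weq_free.
- rewrite !inv_word_cat -catA.
  have Hr' : weq (inv_word r) [::].
    apply: (weq_trans (v := inv_word r ++ r)); last exact: wequiv_cancel_inv (rel_over Hr).
    by apply: weq_sym; have := @weq_rel _ alph rel (inv_word r) r [::] Hr; rewrite !cats0.
  by have := wequiv_ctx (inv_word v0) (inv_word u0) Hr'.
Qed.

End Words.

Section HLetterEq.
Variables (S : finType) (n : nat).

Definition hletter_enc (l : hletter S n) : S + ('I_n * seq (S * bool)) :=
  match l with LS s => inl s | LH j w => inr (j, w) end.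
Definition hletter_dec (e : S + ('I_n * seq (S * bool))) : hletter S n :=
  match e with inl s => LS n s | inr (j, w) => LH j w end.
Lemma hletter_encK : cancel hletter_enc hletter_dec. Proof. by case. Qed.

End HLetterEq.

HB.instance Definition _ (S : finType) (n : nat) :=
  Equality.copy (hletter S n) (can_type (@hletter_encK S n)).

Section Letters.
Variables (S : finType) (R : seq (seq S)) (n : nat) (Si : 'I_n -> {set S})
  (rho : option nat) (i : 'I_n).
Local Notation heq := (hequiv R Si rho i).
Local Notation over := (word_over (fun s : S => s \in Si i)).
Local Notation leqv := (leqv R Si rho).
Local Notation lseq_eqv := (lseq_eqv R Si rho).
Implicit Types (x y : hletter S n * bool) (u v r : seq (hletter S n * bool)).

Lemma relH_over (r : seq (S * bool)) : relH R Si rho i r -> over r.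
Proof. by case=> w [Hw [_ [_ ->]]] _ /mapP [s Hs ->]; apply: (allP Hw). Qed.

Lemma hequiv_inv (u v : seq (S * bool)) : heq u v -> heq (inv_word u) (inv_word v).
Proof. exact/wequiv_inv/relH_over. Qed.

Lemma hword_flip x : hword (x.1, ~~ x.2) = inv_word (hword x).
Proof. by case: x => [[s|j w] [|]] //=; rewrite /hword /= inv_wordK. Qed.

Definition hwords u : seq (S * bool) := flatten (map (@hword S n) u).

Lemma hwords_cat u v : hwords (u ++ v) = hwords u ++ hwords v.
Proof. by rewrite /hwords map_cat flatten_cat. Qed.

Lemma hwords_inv r : hwords (inv_word r) = inv_word (hwords r).
Proof.
elim: r => //= x r IH.
by rewrite inv_word_cons hwords_cat IH /hwords /= cats0 hword_flip inv_word_cat.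
Qed.

Lemma hword_over x : isLH i x.1 -> valid_letter Si x.1 -> over (hword x).
Proof.
case: x => [[s|j w] b] //= /eqP -> Hv.
have Hw : over w by move=> y Hy; apply: (allP Hv).
by rewrite /hword /=; case: b => //; apply: word_over_inv.
Qed.

Lemma hwords_over r : all (fun x => isLH i x.1 && valid_letter Si x.1) r -> over (hwords r).
Proof.
elim: r => [|x r IH] /=; first by [].
by case/andP=> /andP [Hi Hv] /IH Hr; apply/word_over_cat; split; first exact: hword_over.
Qed.

Lemma hwords_rot_trivial r k : all (fun x => isLH i x.1 && valid_letter Si x.1) r ->
  heq (hwords r) [::] -> heq (hwords (rot k r)) [::].
Proof.
move=> /hwords_over; rewrite /rot -{1 2}(cat_take_drop k r) !hwords_cat.
by case/word_over_cat=> _ Hdrop; apply: wequiv_rot.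
Qed.

Definition same_letter (l l' : hletter S n) : Prop := leqv (l, true) (l', true).

Lemma leqv_same_letter x y : leqv x y -> same_letter x.1 y.1.
Proof. by case=> _ H. Qed.

Lemma same_letter_LH j w l : same_letter (LH j w) l ->
  exists2 w', l = LH j w' & hequiv R Si rho j w w'.
Proof. by case: l => [s [_ []] | j' w' [_ [<- H]]]; exists w'. Qed.

Lemma same_letter_isLH j l l' : same_letter l l' -> isLH j l = isLH j l'.
Proof. by case: l l' => [s|j1 w1] [s'|j2 w2] [_] //= [-> _]. Qed.

Lemma leqv_hword x y : leqv x y -> isLH i x.1 -> heq (hword x) (hword y).
Proof.
case: x y => [[s|j w] b] [[s'|j' w'] b'] //=; first by case.
case=> /= <- [<- Hw] /eqP Ej; subst j.
by rewrite /hword /=; case: b; last exact: hequiv_inv Hw.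
Qed.

Lemma lseq_eqv_hwords u v : lseq_eqv u v -> all (fun x => isLH i x.1) u ->
  heq (hwords u) (hwords v).
Proof.
elim: u v => [|x u IH] [|y v] //=; first by move=> _ _; apply: weq_refl.
by case=> Hxy Huv /andP [Hx Hu]; apply: wequiv_cat (leqv_hword Hxy Hx) (IH v Huv Hu).
Qed.

Lemma lseq_eqv_meml u v x : lseq_eqv u v -> x \in u -> exists2 y, y \in v & leqv x y.
Proof.
elim: u v => [|a u IH] [|b v] //= [Hab Huv]; rewrite inE => /orP [/eqP -> | Hx].
  by exists b; rewrite ?mem_head.
by case: (IH v Huv Hx) => y Hy Hxy; exists y; rewrite // inE Hy orbT.
Qed.

Lemma lseq_eqv_memr u v y : lseq_eqv u v -> y \in v -> exists2 x, x \in u & leqv x y.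
Proof.
elim: u v => [|a u IH] [|b v] //= [Hab Huv]; rewrite inE => /orP [/eqP -> | Hy].
  by exists a; rewrite ?mem_head.
by case: (IH v Huv Hy) => x Hx Hxy; exists x; rewrite // inE Hx orbT.
Qed.

Section CyclicMatch.
Variables (u r : seq (hletter S n * bool)) (k : nat).
Hypothesis u_rot : lseq_eqv u (rot k r) \/ lseq_eqv u (rot k (inv_word r)).

Lemma cyc_matchl x : x \in u -> exists2 y, y \in r & same_letter x.1 y.1.
Proof.
move=> Hx; case: u_rot => /lseq_eqv_meml /(_ Hx) [y]; rewrite mem_rot => Hy /leqv_same_letter.
  by exists y.
by rewrite mem_inv_word in Hy; exists (y.1, ~~ y.2).
Qed.

Lemma cyc_matchr y : y \in r -> exists2 x, x \in u & same_letter x.1 y.1.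
Proof.
move=> Hy; have Hy' : (y.1, ~~ y.2) \in inv_word r.
  by rewrite mem_inv_word /= negbK -surjective_pairing.
case: u_rot => /lseq_eqv_memr H.
  by case: (H y); rewrite ?mem_rot // => x Hx /leqv_same_letter; exists x.
by case: (H (y.1, ~~ y.2)); rewrite ?mem_rot // => x Hx /leqv_same_letter; exists x.
Qed.

Lemma cyc_hwords_trivial :
  all (fun x => isLH i x.1) u -> all (fun x => isLH i x.1 && valid_letter Si x.1) r ->
  heq (hwords r) [::] -> heq (hwords u) [::].
Proof.
move=> Hu Hr Htriv.
have Hr' : all (fun x => isLH i x.1 && valid_letter Si x.1) (inv_word r).
  by apply/allP=> y; rewrite mem_inv_word => /(allP Hr).
have Htriv' : heq (hwords (inv_word r)) [::].
  by rewrite hwords_inv; have := hequiv_inv Htriv.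
by case: u_rot => /lseq_eqv_hwords /(_ Hu) /wequiv_trivial_iff Hiff; apply/Hiff/hwords_rot_trivial.
Qed.

End CyclicMatch.

Definition hlen_le (w : seq (S * bool)) (k : nat) : Prop :=
  exists W, [/\ size W <= k, over W & heq w W].

Lemma hlen_le_cat (u v : seq (S * bool)) k l :
  hlen_le u k -> hlen_le v l -> hlen_le (u ++ v) (k + l).
Proof.
case=> U [HU1 HU2 HU3] [V [HV1 HV2 HV3]]; exists (U ++ V); split.
- by rewrite size_cat leq_add.
- exact/word_over_cat.
- exact: wequiv_cat.
Qed.

Lemma hlen_le_inv w k : hlen_le w k -> hlen_le (inv_word w) k.
Proof.
case=> W [H1 H2 H3]; exists (inv_word W); split.
- by rewrite size_inv_word.
- exact: word_over_inv.
- exact: hequiv_inv.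
Qed.

Lemma hlen_le_trivial_cat (u v : seq (S * bool)) k :
  heq (u ++ v) [::] -> hlen_le v k -> hlen_le u k.
Proof.
move=> Huv [W [H1 H2 H3]]; exists (inv_word W); split.
- by rewrite size_inv_word.
- exact: word_over_inv.
apply: wequiv_cat_trivial H2 _; apply: weq_trans Huv.
by apply: wequiv_cat (weq_sym H3); apply: weq_refl.
Qed.

Lemma cplx_LH_le w W : heq w W -> cplx R Si rho (LH i w) <= size W.
Proof.
move=> H; rewrite /cplx; case: ex_minnP => m _ Hmin; apply: Hmin.
by apply: pbP; exists W.
Qed.

Lemma cplx_le x k : isLH i x.1 -> hlen_le (hword x) k -> cplx R Si rho x.1 <= k.
Proof.
case: x => [[s|j w] b] //= /eqP ->.
have Hw : hlen_le w k -> cplx R Si rho (LH i w) <= k.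
  by case=> W [HW _ H]; apply: leq_trans (cplx_LH_le H) HW.
by case: b; rewrite /hword //= => /hlen_le_inv; rewrite inv_wordK.
Qed.

End Letters.

Section FirstReturn.
Variables (T : finType) (f : T -> T) (P : pred T).

Definition return_time (x : T) : nat := find P (traject f (f x) (order f x)).
Definition first_return (x : T) : T := iter (return_time x).+1 f x.

Lemma fconnect_first_return x : fconnect f x (first_return x).
Proof. exact: fconnect_iter. Qed.

Lemma nth_return_traject x j : j < order f x ->
  nth (f x) (traject f (f x) (order f x)) j = iter j.+1 f x.
Proof. by move=> Hj; rewrite nth_traject // iterSr. Qed.

Lemma before_first_return x j : j < return_time x -> ~~ P (iter j.+1 f x).
Proof.
move=> Hj; have Hlt : j < order f x.
  by apply: leq_trans Hj _; rewrite -[order f x](size_traject f (f x)) find_size.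
by rewrite -nth_return_traject // before_find.
Qed.

Hypothesis f_inj : injective f.

Lemma first_return_in x : P x -> P (first_return x).
Proof.
move=> Px; have Hord := order_gt0 f x.
have Hhas : has P (traject f (f x) (order f x)).
  have Ex : iter (order f x).-1.+1 f x = x by rewrite prednK // iter_order.
  apply/hasP; exists x => //; rewrite -{1}Ex -nth_return_traject ?prednK //.
  by rewrite mem_nth // size_traject prednK.
have Hlt : return_time x < order f x by rewrite has_find size_traject in Hhas.
by have := nth_find (f x) Hhas; rewrite nth_return_traject.
Qed.

Lemma iter_inj k : injective (iter k f).
Proof. by elim: k => [|k IH] x y //= /f_inj /IH. Qed.

Lemma first_return_inj : {in P &, injective first_return}.
Proof.
move=> x y; wlog le_xy : x y / return_time x <= return_time y.
  move=> W Px Py E; case/orP: (leq_total (return_time x) (return_time y)) => H.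
    exact: W.
  by apply/esym/W.
move=> Px Py; rewrite /first_return -(subnKC le_xy) -addSn iterD => /iter_inj.
case: (return_time y - return_time x) (leq_subr (return_time x) (return_time y)) => [//|d] Hd Exy.
by move: Px; rewrite Exy unfold_in (negbTE (before_first_return Hd)).
Qed.

End FirstReturn.

Lemma max_sum_le_card_except (T : finType) (A : {set T}) (F : T -> nat) b :
  {in A, forall z, z != b -> F z <= 1} -> (b \in A -> F b <= #|A|) ->
  \max_(z in A) F z <= #|A| /\ \sum_(z in A) F z <= 2 * #|A|.
Proof.
move=> Hle1 Hb; split.
  apply/bigmax_leqP => z Hz; case: (eqVneq z b) Hz => [-> | Hzb] Hz; first exact: Hb.
  by apply: leq_trans (Hle1 z Hz Hzb) _; apply/card_gt0P; exists z.
have Hrest : \sum_(z in A | z != b) F z <= #|A|.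
  apply: (@leq_trans (\sum_(z in A | z != b) 1)).
    by apply: leq_sum => z /andP [Hz Hzb]; apply: Hle1.
  by rewrite sum1_card; apply: subset_leq_card; apply/subsetP => z; rewrite unfold_in => /andP [].
rewrite mul2n -addnn; case: (boolP (b \in A)) => HbA.
  by rewrite (bigD1 b) //= leq_add // Hb.
rewrite (eq_bigl (fun z => (z \in A) && (z != b))); first exact: leq_trans Hrest (leq_addl _ _).
by move=> z; case: (eqVneq z b) => [-> | _]; rewrite ?(negbTE HbA) ?andbT.
Qed.

Section Cluster.
Variables (S : finType) (R : seq (seq S)) (n : nat) (Si : 'I_n -> {set S})
  (rho : option nat).
Variables (D : finType) (ed fa : D -> D) (outer : D) (lab : D -> hletter S n * bool).
Hypotheses (edK : involutive ed) (fa_inj : injective fa)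
  (labE : forall x, lab (ed x) = ((lab x).1, ~~ (lab x).2))
  (labV : forall x, valid_letter Si (lab x).1)
  (faces : forall x, inner fa outer x -> cyc_relX R Si rho (face_word fa lab x)).
Variables (i : 'I_n) (x0 : D).
Hypothesis typeH_x0 : typeH fa outer lab i x0.

Local Notation C := (cluster ed fa outer lab i x0).
Local Notation B := (bdC ed C).
Local Notation heq := (hequiv R Si rho i).
Local Notation over := (word_over (fun s : S => s \in Si i)).
Local Notation typeH := (typeH fa outer lab i).
Local Notation inner := (inner fa outer).
Local Notation face_word := (face_word fa lab).
Local Notation sg := (sigma ed fa).

Lemma typeH_fconnect x y : fconnect fa x y -> typeH x -> typeH y.
Proof.
move=> Hxy /andP [Hin Hall]; apply/andP; split.
  by apply: contra Hin => Hy; apply: connect_trans Hy _; rewrite (fconnect_sym fa_inj).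
apply/allP => z; rewrite -fconnect_orbit => Hz; apply: (allP Hall).
by rewrite -fconnect_orbit; apply: connect_trans Hxy Hz.
Qed.

Lemma connect_cadj_typeH x y : connect (cadj ed fa outer lab i) x y -> typeH x -> typeH y.
Proof.
case/connectP => p; elim: p x => [|z p IH] x /=; first by move=> _ ->.
by case/andP => /and3P [_ Hz _] Hp Hy _; apply: IH Hp Hy Hz.
Qed.

Lemma cluster_typeH y : y \in C -> typeH y.
Proof. by rewrite inE => /connect_cadj_typeH; apply. Qed.

Lemma cluster_cadj x y : x \in C -> cadj ed fa outer lab i x y -> y \in C.
Proof. by rewrite !inE => Hx /connect1; apply: connect_trans. Qed.

Lemma cluster_fa x : x \in C -> fa x \in C.
Proof.
move=> Hx; apply: (cluster_cadj Hx).
by rewrite /cadj cluster_typeH // (typeH_fconnect (fconnect1 fa x) (cluster_typeH Hx)) fconnect1.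
Qed.

Lemma cluster_ed x : x \in C -> typeH (ed x) -> ed x \in C.
Proof.
move=> Hx HT; apply: (cluster_cadj Hx); rewrite /cadj cluster_typeH // HT /=.
by apply/orP; right; apply/existsP; exists x; rewrite !connect0.
Qed.

Lemma typeH_isLH x : typeH x -> isLH i (lab x).1.
Proof. by case/andP => _ /allP; apply; rewrite -fconnect_orbit connect0. Qed.

Lemma inCl_hword_over x : inCl ed C x -> over (hword (lab x)).
Proof.
move=> Hx; apply: hword_over (labV x).
by case/orP: Hx => /cluster_typeH /typeH_isLH; rewrite ?labE.
Qed.

Lemma lab_in_face x : lab x \in face_word x.
Proof. by apply: map_f; rewrite -fconnect_orbit connect0. Qed.

Lemma typeH_face_trivial x : typeH x -> heq (hwords (face_word x)) [::].
Proof.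
move=> Hx; have /andP [Hin Hall] := Hx.
have Hface : all (fun l => isLH i l.1) (face_word x) by rewrite all_map.
case: (faces Hin) => r [k [Hr Hrot]].
have [y Hy Hxy] := cyc_matchl Hrot (lab_in_face x).
have Hyi : isLH i y.1 by rewrite -(same_letter_isLH _ Hxy) typeH_isLH.
case: Hr => [[r0 [_ Er]] | [[j [s [_ Er]]] | [j [_ [Hr Htriv]]]]].
- by move: Hy Hyi; rewrite Er => /mapP [s _ ->].
- have HLS : (LS n s, true) \in r by rewrite Er !inE eqxx orbT.
  have [z Hz Hzs] := cyc_matchr Hrot HLS.
  by move: (allP Hface z Hz); rewrite (same_letter_isLH _ Hzs).
- have /andP [Hyj _] := allP Hr y Hy.
  have Eji : j = i by case: (y.1) Hyj Hyi => // ? ? /eqP -> /eqP.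
  by subst j; apply: cyc_hwords_trivial Hrot Hface Hr Htriv.
Qed.

(* The only relators of X_rho mixing letters of tilde H_i with other letters are
   the words tilde s^-1 p_i(tilde s). *)
Lemma mixed_face_letter y w : inner y -> ~~ typeH y -> (lab y).1 = LH i w ->
  exists2 s, s \in Si i & heq w [:: (s, true)].
Proof.
move=> Hin HnT Ely; case: (faces Hin) => r [k [Hr Hrot]].
have [z Hz] := cyc_matchl Hrot (lab_in_face y); rewrite Ely => /same_letter_LH [w' Ez Hw].
case: Hr => [[r0 [_ Er]] | [[j [s [Hs Er]]] | [j [_ [Hr _]]]]].
- by move: Hz Ez; rewrite Er => /mapP [s _ ->].
- move: Hz Ez; rewrite Er !inE => /orP [] /eqP -> //= [Eji Ew].
  by subst j w'; exists s.
- have Eji : j = i by have /andP [] := allP Hr z Hz; rewrite Ez => /eqP.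
  subst j; have Hface : all (fun l => isLH i l.1) (face_word y).
    apply/allP => l Hl; have [z' Hz' Hlz'] := cyc_matchl Hrot Hl.
    by rewrite (same_letter_isLH _ Hlz'); have /andP [] := allP Hr z' Hz'.
  by case/negP: HnT; rewrite all_map in Hface; apply/andP.
Qed.

Definition path_word (p : seq D) : seq (S * bool) := hwords (map lab p).

Lemma path_word_cat p q : path_word (p ++ q) = path_word p ++ path_word q.
Proof. by rewrite /path_word map_cat hwords_cat. Qed.

Lemma path_word_over p : all (inCl ed C) p -> over (path_word p).
Proof.
elim: p => [|x p IH] //= /andP [Hx Hp].
by apply/word_over_cat; split; [apply: inCl_hword_over | apply: IH].
Qed.

Lemma hstep_trivial_iff p q : hstep ed fa C p q ->
  (heq (path_word p) [::] <-> heq (path_word q) [::]).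
Proof.
case=> /andP [Hp _] [_ [-> | [u [v [-> [[x [Hx ->]] | [x [HxC ->]]]]]]]].
- case: p Hp => [|x p] //= /andP [Hx Hp].
  rewrite rot1_cons -cats1 path_word_cat.
  have -> : path_word [:: x] = hword (lab x) by rewrite /path_word /hwords /= cats0.
  split; apply: wequiv_rot; [exact: path_word_over | exact: inCl_hword_over].
- rewrite !path_word_cat; apply: wequiv_trivial_iff; apply: (wequiv_ctx _ _ (m' := [::])).
  rewrite /path_word /hwords /= cats0 labE hword_flip.
  exact/wequiv_cancel/inCl_hword_over.
- rewrite !path_word_cat; apply: wequiv_trivial_iff; apply: (wequiv_ctx _ _ (m' := [::])).
  exact/typeH_face_trivial/cluster_typeH.
Qed.

Lemma loop_word_trivial p : simply_connected ed fa C -> loopC ed fa C p ->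
  heq (path_word p) [::].
Proof.
case=> _ Hsc /Hsc; set q := [::] => Hpq.
suff <- : heq (path_word q) [::] <-> heq (path_word p) [::] by apply: weq_refl.
elim: Hpq => [a b /hstep_trivial_iff | a | a b _ IH | a b c _ IH1 _ IH2]; tauto.
Qed.

(* Turning around the head of a dart of bd C inside C until an edge of bd C is
   reached gives the next dart of the boundary loop. *)
Definition exposed (y : D) : bool := (y \notin C) || (ed y \notin C).
Definition bd_next (x : D) : D := first_return sg exposed (ed x).

Lemma sigma_inj : injective sg.
Proof. by move=> x y /fa_inj /(can_inj edK). Qed.

Lemma in_bdC x : (x \in B) = (x \in C) && (ed x \notin C).
Proof. by rewrite in_set. Qed.

Lemma bd_next_in x : x \in B -> bd_next x \in B.
Proof.
rewrite in_bdC => /andP [HxC HedC].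
have Hexp : exposed (ed x) by rewrite /exposed HedC.
have Hnext : bd_next x \in C.
  rewrite /bd_next /first_return iterS /sigma; apply: cluster_fa.
  case Et: (return_time sg exposed (ed x)) => [|j] /=; first by rewrite edK.
  have := before_first_return (f := sg) (P := exposed) (x := ed x) (j := j).
  by rewrite Et ltnSn iterS /exposed negb_or !negbK => /(_ isT) /andP [].
have := first_return_in (P := exposed) sigma_inj Hexp.
by rewrite in_bdC /exposed Hnext -/(bd_next x) /= => ->.
Qed.

Lemma bd_next_inj : {in B &, injective bd_next}.
Proof.
have exposed_ed z : z \in B -> exposed (ed z) by rewrite in_bdC /exposed => /andP [_ ->].
move=> x y Hx Hy E; apply: (can_inj edK).
exact: (first_return_inj sigma_inj (exposed_ed x Hx) (exposed_ed y Hy) E).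
Qed.

Definition bd_succ (x : D) : D := if x \in B then bd_next x else x.

Lemma bd_succ_inj : injective bd_succ.
Proof.
move=> x y; rewrite /bd_succ; case: ifP => Hx; case: ifP => Hy.
- exact: bd_next_inj.
- by move=> E; move: (bd_next_in Hx); rewrite E Hy.
- by move=> E; move: (bd_next_in Hy); rewrite -E Hx.
- by [].
Qed.

Lemma orbit_bd_succ_sub b : b \in B -> {subset orbit bd_succ b <= B}.
Proof.
move=> Hb _ /trajectP [j _ ->]; elim: j => //= j IH.
by rewrite /bd_succ IH bd_next_in.
Qed.

Lemma bd_loop b : b \in B -> loopC ed fa C (orbit bd_succ b).
Proof.
move=> Hb; have Hsub := orbit_bd_succ_sub Hb; apply/andP; split.
  by apply/allP => z /Hsub; rewrite in_bdC /inCl => /andP [->].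
apply: (sub_in_cycle (P := mem B)) (cycle_orbit bd_succ_inj b); last exact/allP.
by move=> x _ Hx _ /eqP <-; rewrite /bd_succ Hx; apply: fconnect_first_return.
Qed.

Lemma path_word_hlen_le p : {in p, forall z, hlen_le R Si rho i (hword (lab z)) 1} ->
  hlen_le R Si rho i (path_word p) (size p).
Proof.
elim: p => [|x p IH] Hp; first by exists [::]; split=> //; apply: weq_refl.
apply: (hlen_le_cat (k := 1)); first by apply: Hp; rewrite mem_head.
by apply: IH => z Hz; apply: Hp; rewrite inE Hz orbT.
Qed.

Lemma bd_hlen_le1 z : z \in B -> ~~ fconnect fa outer (ed z) ->
  hlen_le R Si rho i (hword (lab z)) 1.
Proof.
rewrite in_bdC => /andP [HzC HedC] Hin.
have HnT : ~~ typeH (ed z) by apply: contra HedC; apply: cluster_ed.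
have := typeH_isLH (cluster_typeH HzC); case Elz: (lab z) => [[s'|j w] b] //= /eqP Eji.
subst j; have Eled : (lab (ed z)).1 = LH i w by rewrite labE Elz.
have [s Hs Hw] := mixed_face_letter Hin HnT Eled.
have Hover : over [:: (s, true)] by move=> y; rewrite inE => /eqP ->.
have H1 : hlen_le R Si rho i w 1 by exists [:: (s, true)].
by rewrite /hword /=; case: b {Elz}; last exact: hlen_le_inv.
Qed.

Lemma bd_cplx_le1 z : z \in B -> ~~ fconnect fa outer (ed z) -> cplx R Si rho (lab z).1 <= 1.
Proof.
move=> Hz Hout; apply: cplx_le (bd_hlen_le1 Hz Hout).
by move: Hz; rewrite in_bdC => /andP [/cluster_typeH /typeH_isLH].
Qed.

Lemma bd_cplx_le_card b : simply_connected ed fa C -> b \in B ->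
  {in B, forall z, z != b -> ~~ fconnect fa outer (ed z)} ->
  cplx R Si rho (lab b).1 <= #|B|.
Proof.
move=> Hsc Hb Hout; have Hsub := orbit_bd_succ_sub Hb.
have [rest Erest] : exists rest, orbit bd_succ b = b :: rest.
  by rewrite /orbit; case: (order bd_succ b) (@order_gt0 _ bd_succ b) => // m _; eexists.
have Hsize : size (b :: rest) <= #|B|.
  rewrite -Erest -(card_uniqP (@orbit_uniq _ bd_succ b)).
  by apply/subset_leq_card/subsetP => z /Hsub.
have /andP [Hbrest _] : uniq (b :: rest) by rewrite -Erest orbit_uniq.
have Hrest : hlen_le R Si rho i (path_word rest) (size rest).
  apply: path_word_hlen_le => z Hz.
  have HzB : z \in B by apply: Hsub; rewrite Erest inE Hz orbT.
  apply: bd_hlen_le1 HzB (Hout z HzB _).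
  by apply: contraNneq Hbrest => <-.
have Hb_triv : heq (hword (lab b) ++ path_word rest) [::].
  by have := loop_word_trivial Hsc (bd_loop Hb); rewrite Erest.
apply: leq_trans (cplx_le _ (hlen_le_trivial_cat Hb_triv Hrest)) (ltnW Hsize).
by move: Hb; rewrite in_bdC => /andP [/cluster_typeH /typeH_isLH].
Qed.

Lemma not_complicated_outer_unique : ~~ complicated ed fa outer C ->
  exists b, {in B, forall z, z != b -> ~~ fconnect fa outer (ed z)}.
Proof.
rewrite /complicated -leqNgt => Hle.
case: (pickP (mem (bdC_bdD ed fa outer C))) => [b Hb | Hnone]; last first.
  by exists x0 => z Hz _; apply/negP => Hout; have := Hnone z; rewrite /= inE Hz Hout.
exists b => z Hz Hzb; apply/negP => Hout.
have Hz' : z \in bdC_bdD ed fa outer C by rewrite inE Hz Hout.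
have Hbz : [set b; z] \subset bdC_bdD ed fa outer C.
  by apply/subsetP => y; rewrite in_set2 => /orP [] /eqP ->.
by have := leq_trans (subset_leq_card Hbz) Hle; rewrite cards2 eq_sym Hzb.
Qed.

End Cluster.

Theorem lemma2p5 (S : finType) (R : seq (seq S)) (n : nat)
    (Si : 'I_n -> {set S}) (rho : option nat)
    (HR : forall r, r \in R -> (size r == 2) || (size r == 3))
    (HS : forall s : S, exists t : S, trivG R [:: (s, true); (t, true)])
    (HSi : forall (i : 'I_n) (s : S), s \in Si i ->
             exists2 t : S, t \in Si i & trivG R [:: (s, true); (t, true)])
    (D : finType) (ed fa : D -> D) (outer : D)
    (lab : D -> hletter S n * bool)
    (HD : is_VK R Si rho ed fa outer lab)
    (i : 'I_n) (x0 : D) (Hx0 : typeH fa outer lab i x0) :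
  let C := cluster ed fa outer lab i x0 in
  simply_connected ed fa C ->
  ~~ complicated ed fa outer C ->
  norminf_bd R Si rho ed lab C <= length_bd ed C /\
  norm1_bd R Si rho ed lab C <= 2 * length_bd ed C.
Proof.
move=> C Hsc Hnc; case: HD => [[edK _ fa_inj _] [_ labP faces]].
have labE x : lab (ed x) = ((lab x).1, ~~ (lab x).2) by case: (labP x).
have labV x : valid_letter Si (lab x).1 by case: (labP x).
have [b Hb] := not_complicated_outer_unique Hnc.
apply: (max_sum_le_card_except (b := b)) => [z Hz Hzb | HbB].
  by apply: (bd_cplx_le1 labE faces Hx0 Hz); apply: Hb.
by apply: (bd_cplx_le_card edK fa_inj labE labV faces Hx0).
Qed.
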